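(* Let $\Omega$ be a weighted clone, $\omega_1,\dots,\omega_n\in\Omega$, and $c_1,\dots,c_n\ge0$ real numbers. Let $\ell_i$ denote the arity of $\omega_i$. For each $1\le i\le n$ and $1\le j\le\ell_i$ let $g_{i,j}\in\mathrm{supp}(\Omega)$ be a $k$-ary operation (for a fixed $k$). If the function $\mu=\sum_{i=1}^n c_i\cdot\omega_i[g_{i,1},\dots,g_{i,\ell_i}]$ is a proper weighting, then $\mu\in\Omega$.
   Context: $D$ is a fixed finite set with $|D|\ge2$. A $k$-ary operation is $f:D^k\to D$; $\mathbf{O}^{(k)}_D$ is the set of $k$-ary operations. Projections: $e^{(k)}_i(x_1,\dots,x_k)=x_i$; $\mathbf{J}_D$ is the set of all projections, $\mathbf{J}_D^{(k)}$ the $k$-ary ones. Superposition of operations: $f[g_1,\dots,g_k](\mathbf{x})=f(g_1(\mathbf{x}),\dots,g_k(\mathbf{x}))$. A $k$-ary (proper) weighting is a function $\omega:\mathbf{O}^{(k)}_D\to\mathbb{R}$ with $\sum_f\omega(f)=0$ and $\omega(f)<0$ only if $f$ is a projection (a function with zero sum that is negative on some non-projection is an improper weighting). $\mathrm{supp}(\omega)=\mathbf{J}_D^{(k)}\cup\{f:\omega(f)>0\}$, and for a non-empty set $\Omega$ of weightings, $\mathrm{supp}(\Omega)=\mathbf{J}_D\cup\bigcup_{\omega\in\Omega}\mathrm{supp}(\omega)$. For $\omega:\mathbf{O}^{(\ell)}_D\to\mathbb{R}$ and $k$-ary $g_1,\dots,g_\ell$, the superposition $\omega[g_1,\dots,g_\ell]:\mathbf{O}^{(k)}_D\to\mathbb{R}$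 is $\omega[g_1,\dots,g_\ell](f')=\sum_{f:f[g_1,\dots,g_\ell]=f'}\omega(f)$; it is proper if it is a proper weighting. Topology: the $k$-ary weightings lie in $\mathbb{R}^{\mathbf{O}^{(k)}_D}$ (Euclidean topology), with the disjoint union topology over $k$. A weighted clone is a non-empty set $\Omega$ of weightings closed under scaling by non-negative reals, addition of weightings of equal arity, and proper superposition with operations from $\mathrm{supp}(\Omega)$, and topologically closed. *)

From HB Require Import structures.
From mathcomp Require Import all_boot all_order all_algebra.
From mathcomp Require Import reals.
Set Implicit Arguments. Unset Strict Implicit. Unset Printing Implicit Defensive.
Import Order.TTheory GRing.Theory Num.Theory.
Local Open Scope ring_scope.

Section WeightedClones.
Variable D : finType.
Variable R : realType.

Definition op (k : nat) := {ffun {ffun 'I_k -> D} -> D}.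

Definition proj (k : nat) (i : 'I_k) : op k := [ffun x : {ffun 'I_k -> D} => x i].

Definition is_proj (k : nat) (f : op k) : Prop := exists i : 'I_k, f = proj i.

Definition is_weighting (k : nat) (w : op k -> R) : Prop :=
  (\sum_(f : op k) w f = 0) /\ (forall f : op k, w f < 0 -> is_proj f).

Definition wset := forall k : nat, (op k -> R) -> Prop.

Definition supp (Om : wset) (k : nat) (f : op k) : Prop :=
  is_proj f \/ exists w : op k -> R, Om k w /\ 0 < w f.

Definition comp (l k : nat) (f : op l) (gs : 'I_l -> op k) : op k :=
  [ffun x : {ffun 'I_k -> D} => f [ffun j => gs j x]].

Definition wsup (l k : nat) (w : op l -> R) (gs : 'I_l -> op k) : op k -> R :=
  fun f' => \sum_(f : op l | comp f gs == f') w f.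

Record weighted_clone (Om : wset) : Prop := {
  wc_nonempty : exists k (w : op k -> R), Om k w;
  wc_weighting : forall k (w : op k -> R), Om k w -> is_weighting w;
  wc_scale : forall k (w : op k -> R) (c : R), 0 <= c -> Om k w ->
    Om k (fun f => c * w f);
  wc_add : forall k (w1 w2 : op k -> R), Om k w1 -> Om k w2 ->
    Om k (fun f => w1 f + w2 f);
  wc_sup : forall l k (w : op l -> R) (gs : 'I_l -> op k),
    Om l w -> (forall j, supp Om (gs j)) -> is_weighting (wsup w gs) ->
    Om k (wsup w gs);
  (* topologically closed: each arity component is closed in R^(O^(k))
     (closure in the sup-norm, equivalent to the Euclidean topology) *)
  wc_closed : forall k (w : op k -> R),
    (forall e : R, 0 < e -> exists w' : op k -> R,
        Om k w' /\ forall f, `|w f - w' f| < e) ->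
    Om k w
}.

End WeightedClones.

From Pilot Require Import Defs.
From HB Require Import structures.
From mathcomp Require Import all_boot all_order all_algebra.
From mathcomp Require Import reals.
From Stdlib Require Import FunctionalExtensionality.
Import Order.TTheory GRing.Theory Num.Theory.
Local Open Scope ring_scope.

(* Collect all the inner operations g_(i,j) into a single family G indexed by
   the pairs (i, j), of arity L say.  Each w_i[g_(i,1), ..., g_(i,l_i)] is then
   the superposition of the minor w_i[e_(i,1), ..., e_(i,l_i)] (projections of
   arity L) with G.  Superposition with projections maps weightings to proper
   weightings, so these minors lie in Om; so does their conic combination, and
   superposing it with G (whose members lie in supp Om) gives mu, because
   superposition is functorial and linear in the weighting. *)

Section Superposition.
Context {D : finType} {R : realType}.

Lemma comp_projE (l k : nat) (a : 'I_l) (gs : 'I_l -> op D k) :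
  Defs.comp (proj D a) gs = gs a.
Proof. by apply/ffunP => x; rewrite !ffunE. Qed.

Lemma comp_compA (m l k : nat) (f : op D m) (ps : 'I_m -> op D l)
    (gs : 'I_l -> op D k) :
  Defs.comp (Defs.comp f ps) gs = Defs.comp f (fun j => Defs.comp (ps j) gs).
Proof.
apply/ffunP => x; rewrite !ffunE; congr (f _).
by apply/ffunP => j; rewrite !ffunE.
Qed.

Lemma wsup_wsup (m l k : nat) (w : op D m -> R) (ps : 'I_m -> op D l)
    (gs : 'I_l -> op D k) (f : op D k) :
  wsup (wsup w ps) gs f = wsup w (fun j => Defs.comp (ps j) gs) f.
Proof.
rewrite /wsup (partition_big (fun g => Defs.comp g ps)
  (fun g' => Defs.comp g' gs == f)); last by move=> g; rewrite comp_compA.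
apply: eq_bigr => g' /eqP g'f; apply: eq_bigl => g; rewrite -comp_compA.
by case: eqP => [->|]; rewrite ?andbF // g'f eqxx.
Qed.

Lemma wsup_conic (n l k : nat) (c : 'I_n -> R) (ws : 'I_n -> op D l -> R)
    (gs : 'I_l -> op D k) (f : op D k) :
  wsup (fun g => \sum_(i < n) c i * ws i g) gs f =
  \sum_(i < n) c i * wsup (ws i) gs f.
Proof. by rewrite /wsup exchange_big; apply: eq_bigr => i _; rewrite mulr_sumr. Qed.

Lemma is_weighting_wsup_proj (m l : nat) (w : op D m -> R) (p : 'I_m -> 'I_l) :
  is_weighting w -> is_weighting (wsup w (fun j => proj D (p j))).
Proof.
move=> [sum_w neg_w]; split.
  by rewrite /wsup -[RHS]sum_w (partition_big
    (fun g => Defs.comp g (fun j => proj D (p j))) xpredT).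
move=> f wf_lt0.
have [g /andP[/eqP gf wg_lt0] | ] :=
  pickP [pred g | (Defs.comp g (fun j => proj D (p j)) == f) && (w g < 0)].
  by have [a ga] := neg_w g wg_lt0; exists (p a); rewrite -gf ga comp_projE.
move=> no_neg; exfalso; move: wf_lt0; rewrite ltNge => /negP; apply.
apply: sumr_ge0 => g gf; rewrite leNgt; apply/negP => wg_lt0.
by move: (no_neg g) => /=; rewrite gf wg_lt0.
Qed.

Context {Om : wset D R} (HOm : weighted_clone Om).

Lemma wc_sum (n l : nat) (ws : 'I_n.+1 -> op D l -> R) :
  (forall i, Om l (ws i)) -> Om l (fun g => \sum_(i < n.+1) ws i g).
Proof.
elim: n ws => [|n IHn] ws ws_in.
  have -> : (fun g => \sum_(i < 1) ws i g) = ws ord0.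
    by apply: functional_extensionality => g; rewrite big_ord1.
  exact: ws_in.
have -> : (fun g => \sum_(i < n.+2) ws i g) =
    (fun g => \sum_(i < n.+1) ws (widen_ord (leqnSn _) i) g + ws ord_max g).
  by apply: functional_extensionality => g; rewrite big_ord_recr.
by apply: (wc_add HOm); [apply: IHn | ].
Qed.

Lemma wc_conic {n l : nat} {c : 'I_n -> R} {ws : 'I_n -> op D l -> R} :
  (0 < n)%N -> (forall i, 0 <= c i) -> (forall i, Om l (ws i)) ->
  Om l (fun g => \sum_(i < n) c i * ws i g).
Proof.
case: n c ws => // n c ws _ c_ge0 ws_in.
by apply: (@wc_sum n l (fun i g => c i * ws i g)) => i; apply: wc_scale.
Qed.

Lemma wc_wsup_proj (m l : nat) (w : op D m -> R) (p : 'I_m -> 'I_l) :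
  Om m w -> Om l (wsup w (fun j => proj D (p j))).
Proof.
move=> w_in; apply: (wc_sup HOm w_in).
- by move=> j; left; exists (p j).
- exact/is_weighting_wsup_proj/(wc_weighting HOm).
Qed.

End Superposition.

Theorem lemma3 (D : finType) (R : realType) (Om : wset D R)
  (HD : (1 < #|D|)%N) (HOm : weighted_clone Om)
  (n : nat) (Hn : (0 < n)%N)
  (ls : 'I_n -> nat) (ws : forall i : 'I_n, op D (ls i) -> R)
  (Hws : forall i, Om (ls i) (ws i))
  (c : 'I_n -> R) (Hc : forall i, 0 <= c i)
  (k : nat) (gs : forall i : 'I_n, 'I_(ls i) -> op D k)
  (Hgs : forall i j, supp Om (gs i j)) :
  is_weighting (fun f : op D k => \sum_(i < n) c i * wsup (ws i) (gs i) f) ->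
  Om k (fun f : op D k => \sum_(i < n) c i * wsup (ws i) (gs i) f).
Proof.
move=> mu_weighting.
pose L := #|{: {i : 'I_n & 'I_(ls i)}}|.
pose G : 'I_L -> op D k := fun a => gs (tag (enum_val a)) (tagged (enum_val a)).
pose p (i : 'I_n) (j : 'I_(ls i)) : 'I_L := enum_rank (Tagged (fun i => 'I_(ls i)) j).
have compG i : (fun j => Defs.comp (proj D (p i j)) G) = gs i.
  by apply: functional_extensionality => j; rewrite comp_projE /G /p enum_rankK.
have minors_in i : Om L (wsup (ws i) (fun j => proj D (p i j))).
  exact: wc_wsup_proj.
have conic_in := wc_conic HOm Hn Hc minors_in.
have mu_eq : wsup (fun g => \sum_(i < n) c i * wsup (ws i) (fun j => proj D (p i j)) g) G =
    (fun f => \sum_(i < n) c i * wsup (ws i) (gs i) f).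
  apply: functional_extensionality => f; rewrite wsup_conic.
  by apply: eq_bigr => i _; rewrite wsup_wsup compG.
by rewrite -mu_eq; apply: (wc_sup HOm conic_in) => [j|]; [apply: Hgs | rewrite mu_eq].
Qed.
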